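(* In the standing setting below, for every set $\mathcal{O}'$ of popular sets with $|\mathcal{O}'|\le\kappa$ there is a single $b$-path-system $\mathcal{P}$ that witnesses the popularity of every $O\in\mathcal{O}'$ simultaneously.
   Context: Standing setting: $M,N$ are finitary matroids on a common ground set $E$; $I\in\mathcal{I}(M)\cap\mathcal{I}(N)$ is maximal among common independent sets; $\kappa:=r(N/I)$ is an uncountable regular cardinal and $r(M/I)<\kappa$. Fix a base $J_M$ of $M/I$ and a base $J_N$ of $N/I$, put $B_M:=I\cup J_M$, $B_N:=I\cup J_N$, $b:=(B_M,B_N)$. For a base $B$ of a matroid $M$, $D_M(B)$ is the digraph on $E$ with arc $ef$ iff $e\notin B$ and $f\in C_M(e,B)\setminus\{e\}$ ($C_M(e,B)$ the fundamental circuit); $D(b):=D_M(B_M)\cup D_N^{-1}(B_N)$ where $D^{-1}$ reverses all arcs. A $b$-path is a finite directed path $P$ in $D(b)$ whose initial vertex lies in $B_N\setminus B_M$ (single vertices allowed); $\mathsf{ter}(P)$ is its terminal vertex and $\mathsf{ter}(\mathcal{P})=\{\mathsf{ter}(P):P\in\mathcal{P}\}$. A $b$-path-system is a set of $\kappa$ pairwise disjoint $b$-paths. A $\Delta$-system is a family of sets any two of which intersect in the same set $K$ (the kernel); its petals are $C\setminus K$. A nonempty $K\subseteq E$ is popular if there exist a $b$-path-system $\mathcal{P}$ and a $\Delta$-system $\mathcal{D}$ of $\kappa$ many circuits of $M$ with kernel $K$ such that every petal of $\mathcal{D}$ is contained in $I\cup\mathsf{ter}(\mathcal{P})$; such $\mathcal{P}$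 witnesses the popularity of $K$. *)

From HB Require Import structures.
From mathcomp Require Import all_boot all_order.
From mathcomp Require Import boolp classical_sets cardinality.
Set Implicit Arguments. Unset Strict Implicit. Unset Printing Implicit Defensive.
Local Open Scope classical_set_scope.
Local Open Scope card_scope.

Definition card_lt (T U : Type) (A : set T) (B : set U) : Prop :=
  A #<= B /\ ~ (B #<= A).

Section Matroids.
Variable E : choiceType.

Definition maximal_set (P : set E -> Prop) (X : set E) : Prop :=
  P X /\ forall Y, P Y -> X `<=` Y -> Y = X.

(* Infinite matroid on ground set E (all of E) via independence axioms
   (I1),(I2),(I3),(IM) of Bruhn et al., plus finitarity. *)
Definition is_matroid (ind : set E -> Prop) : Prop :=
  [/\ ind set0,
      (forall X Y, ind Y -> X `<=` Y -> ind X),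
      (forall X B, ind X -> ~ maximal_set ind X -> maximal_set ind B ->
         exists x, B x /\ ~ X x /\ ind (x |` X))
    & (forall (J X : set E), ind J -> J `<=` X ->
         exists Y, maximal_set (fun Y => ind Y /\ J `<=` Y /\ Y `<=` X) Y)].

Definition is_finitary_matroid (ind : set E -> Prop) : Prop :=
  is_matroid ind /\
  (forall X, (forall F, finite_set F -> F `<=` X -> ind F) -> ind X).

Definition circuit (ind : set E -> Prop) (C : set E) : Prop :=
  ~ ind C /\ forall D, D `<=` C -> D <> C -> ind D.

Definition contr_base (ind : set E -> Prop) (I J : set E) : Prop :=
  maximal_set (fun J => J `&` I = set0 /\ ind (I `|` J)) J.

(* arc e f of D_M(B):  e \notin B and f \in C_M(e,B) \ {e}, where the
   fundamental circuit C_M(e,B) is the (unique) circuit contained in B + e *)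
Definition Darc (ind : set E -> Prop) (B : set E) (e f : E) : Prop :=
  ~ B e /\ f <> e /\ exists C, circuit ind C /\ C `<=` e |` B /\ C f.

Section Setting.
Variables (indM indN : set E -> Prop) (I BM BN JN : set E).
(* JN is the fixed base of N/I; kappa := r(N/I) = |JN| *)

Definition Db_arc (e f : E) : Prop := Darc indM BM e f \/ Darc indN BN f e.

Definition is_bpath (P : seq E) : Prop :=
  match P with
  | [::] => False
  | v0 :: _ => [/\ BN v0, ~ BM v0, uniq P &
       forall i, (i.+1 < size P)%N -> Db_arc (nth v0 P i) (nth v0 P i.+1)]
  end.

Definition ter_set (Ps : set (seq E)) : set E :=
  [set e | exists v0 rest, Ps (v0 :: rest) /\ e = last v0 rest].

Definition bpath_system (Ps : set (seq E)) : Prop :=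
  [/\ (forall P, Ps P -> is_bpath P),
      Ps #= JN &
      (forall P Q, Ps P -> Ps Q -> P <> Q -> forall x, x \in P -> x \notin Q)].

Definition delta_system (D : set (set E)) (K : set E) : Prop :=
  forall C C', D C -> D C' -> C <> C' -> C `&` C' = K.

Definition witnesses (Ps : set (seq E)) (K : set E) : Prop :=
  bpath_system Ps /\
  exists D : set (set E),
    [/\ D #= JN, (forall C, D C -> circuit indM C), delta_system D K &
        (forall C, D C -> C `\` K `<=` I `|` ter_set Ps)].

Definition popular (K : set E) : Prop :=
  K <> set0 /\ exists Ps, witnesses Ps K.

End Setting.

Definition regular_card (A : set E) : Prop :=
  forall F : set (set E), card_lt F A -> (forall X, F X -> card_lt X A) ->
    ~ (A `<=` \bigcup_(X in F) X).

End Matroids.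

From HB Require Import structures.
From mathcomp Require Import all_boot all_order.
From mathcomp Require Import boolp classical_sets functions cardinality wochoice.
Set Implicit Arguments. Unset Strict Implicit. Unset Printing Implicit Defensive.
Local Open Scope classical_set_scope.
Local Open Scope card_scope.

(* Well-order JN so that the resulting S, a subset of JN of size kappa, has only small
   proper initial segments, and inject the popular sets into S by h. Then choose greedily
   along the pairs (t, u) with u <= t in S, ordered lexicographically: at stage (t, u) the
   popular set O with h O = u takes a circuit C of its Delta-system whose witnessing paths
   into the petal of C avoid everything used before, and a fresh vertex of JN \ JM is added
   as a one-vertex b-path. Fewer than kappa stages precede any stage and each uses finitely
   many vertices, so by regularity the used part stays small, while kappa circuits with
   pairwise disjoint petals are available; hence a choice always exists. The chosen paths
   form one b-path-system, and each O collects kappa circuits, one at each stage (t, h O). *)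

Lemma card_le_of_fun T U (A : set T) (B : set U) (f : T -> U) :
  {in A &, injective f} -> f @` A `<=` B -> A #<= B.
Proof.
move=> f_inj fAB; apply: card_le_trans (subset_card_le fAB).
by move: (inj_card_eq f_inj); rewrite card_eq_le => /andP[].
Qed.

Lemma card_le_rel T U (A : set T) (B : set U) (r : T -> U -> Prop) :
  (forall a, A a -> exists2 b, B b & r a b) ->
  (forall a a' b, A a -> A a' -> r a b -> r a' b -> a = a') -> A #<= B.
Proof.
move=> rAB r_inj; have [->|/set0P[a0 Aa0]] := eqVneq A set0; first exact: card_ge0.
have [b0 _ _] := rAB a0 Aa0.
have /choice[f fP] : forall a, exists b, A a -> B b /\ r a b.
  move=> a; have [/rAB[b Bb rab]|nAa] := pselect (A a); first by exists b.
  by exists b0.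
apply: (card_le_of_fun (f := f)) => [a a' /set_mem Aa /set_mem Aa' faa'|_ [a Aa <-]].
  by apply: (r_inj _ _ (f a) Aa Aa' (fP a Aa).2); rewrite faa'; exact: (fP a' Aa').2.
exact: (fP a Aa).1.
Qed.

Lemma card_le_injection T U (A : set T) (B : set U) : A #<= B -> B !=set0 ->
  exists2 f : T -> U, {in A &, injective f} & f @` A `<=` B.
Proof.
elim/Ppointed: U => U in B *; first by rewrite (empty_eq0 B) => _ [? []].
move=> /pcard_leP[f] _; exists f; first exact: 'inj_f.
by move=> _ [x Ax <-]; exact: 'funS_f.
Qed.

Lemma card_le_nonempty T U (A : set T) (B : set U) : A #<= B -> A !=set0 -> B !=set0.
Proof.
move=> AB /set0P nA; apply/set0P; apply: contra_neq nA => B0.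
by move: AB; rewrite B0 => /card_le0P.
Qed.

Lemma uncountable_infinite T (A : set T) : ~ countable A -> infinite_set A.
Proof. by move=> ncA /finite_set_countable. Qed.

Section SmallSets.
Variables (E : choiceType) (K : set E).

(* |X| < |K|, stated without appealing to comparability of cardinals. *)
Definition small T (X : set T) := ~ (K #<= X).

Lemma small_card_le T U (X : set T) (Y : set U) : X #<= Y -> small Y -> small X.
Proof. by move=> XY sY KX; apply: sY; exact: card_le_trans KX XY. Qed.

Lemma small_subset T (X Y : set T) : X `<=` Y -> small Y -> small X.
Proof. by move/subset_card_le; exact: small_card_le. Qed.

Lemma small_preimage T U (f : T -> U) (Y : set U) :
  injective f -> small Y -> small (f @^-1` Y).
Proof.
move=> f_inj; apply: small_card_le; apply: (card_le_of_fun (f := f)).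
  by move=> x y _ _; exact: f_inj.
by move=> _ [x Yfx <-].
Qed.

Lemma small_not_cover T (A X : set T) : K #<= A -> small X -> exists2 y, A y & ~ X y.
Proof.
move=> KA sX; apply: contrapT => nAX; apply: sX; apply: card_le_trans KA _.
by apply: subset_card_le => y Ay; apply: contrapT => nXy; apply: nAX; exists y.
Qed.

Hypotheses (K_uncountable : ~ countable K) (K_regular : regular_card K).

Lemma finite_card_le T (X : set T) : finite_set X -> X #<= K.
Proof.
move=> /finite_setP[n Xn]; rewrite (card_le_eql Xn).
apply: card_le_trans (card_leT _) _; apply/infiniteP; exact: uncountable_infinite.
Qed.

Lemma finite_small T (X : set T) : finite_set X -> small X.
Proof.
move=> fX KX; apply: (uncountable_infinite K_uncountable).
exact: card_le_finite KX fX.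
Qed.

(* Regularity is applied to the traces on K of the sets F i, pulled back along an
   injection of K into the union. *)
Lemma small_bigcup I T (Idx : set I) (F : I -> set T) :
  Idx #<= K -> small Idx -> (forall i, Idx i -> small (F i)) ->
  small (\bigcup_(i in Idx) F i).
Proof.
move=> IdxK sIdx sF KF.
have K0 := infinite_setN0 (uncountable_infinite K_uncountable).
have [f f_inj fK] := card_le_injection KF (card_le_nonempty KF K0).
pose Fs := [set K `&` f @^-1` F i | i in Idx].
apply: (K_regular (F := Fs)).
- split; first exact: card_le_trans (card_image_le _ _) IdxK.
  by move=> KFs; apply: sIdx; exact: card_le_trans KFs (card_image_le _ _).
- move=> _ [i Ii <-]; split; first by apply: subset_card_le => ? [].
  apply: small_card_le (sF i Ii); apply: (card_le_of_fun (f := f)).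
    by move=> x y /set_mem[Kx _] /set_mem[Ky _]; apply: f_inj; exact: mem_set.
  by move=> _ [x [_ Fx] <-].
- move=> y Ky; have [i Ii Fy] := fK (f y) (imageP f Ky).
  by exists (K `&` f @^-1` F i); [exists i|].
Qed.

Lemma small_setU T (X Y : set T) : small X -> small Y -> small (X `|` Y).
Proof.
move=> sX sY; apply: (@small_subset _ _ (\bigcup_(b in [set: bool]) if b then X else Y)).
  by move=> y [Xy|Yy]; [exists true|exists false].
apply: small_bigcup => [||[]] //; first exact: finite_card_le.
exact: finite_small.
Qed.
End SmallSets.

Lemma well_founded_total_order (T : eqType) :
  exists lt : T -> T -> Prop,
    well_founded lt /\ forall x y, x <> y -> lt x y \/ lt y x.
Proof.
have [R R_wo] := well_ordering_principle T.
have R_chain : wo_chain R predT by move=> A _; exact: R_wo.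
have R_anti := wo_chain_antisymmetric R_chain.
pose lt x y := R x y /\ x <> y; exists lt; split.
  move=> x; apply: contrapT => nAx.
  have [|z [[+ z_min] _]] := R_wo [pred y | `[< ~ Acc lt y >]].
    by exists x; rewrite inE.
  rewrite inE; apply; constructor => y [Ryz nyz].
  apply: contrapT => nAy; apply: nyz; apply: R_anti => //.
  by rewrite Ryz z_min // inE.
move=> x y nxy; have /orP[Rxy|Ryx] := wo_chainW R_chain isT isT : R x y || R y x.
  by left.
by right; split=> // yx; apply: nxy.
Qed.

Lemma wf_minimal T (lt : T -> T -> Prop) (X : set T) :
  well_founded lt -> X !=set0 -> exists2 m, X m & forall y, X y -> ~ lt y m.
Proof.
move=> lt_wf [x Xx]; apply: contrapT => nmin.
elim: (lt_wf x) Xx => {}x _ IH Xx; apply: nmin; exists x => // y Xy yx.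
exact: IH yx Xy.
Qed.

Definition lexlt T (lt : T -> T -> Prop) (p q : T * T) :=
  lt p.1 q.1 \/ p.1 = q.1 /\ lt p.2 q.2.

Lemma lexlt_wf T (lt : T -> T -> Prop) : well_founded lt -> well_founded (lexlt lt).
Proof.
move=> lt_wf [a b]; elim: (lt_wf a) b => {}a _ IHa b.
elim: (lt_wf b) => {}b _ IHb.
by constructor=> -[c d] [/= ca|[/= -> db]]; [exact: IHa|exact: IHb].
Qed.

Lemma lexlt_total T (lt : T -> T -> Prop) :
  (forall x y, x <> y -> lt x y \/ lt y x) ->
  forall p q, p <> q -> lexlt lt p q \/ lexlt lt q p.
Proof.
move=> lt_total [a b] [c d] /= pq.
have [ac|ac] := pselect (a = c); last first.
  by case: (lt_total a c ac) => ?; [left|right]; left.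
have bd : b <> d by move=> bd; apply: pq; rewrite ac bd.
by case: (lt_total b d bd) => ?; [left|right]; right.
Qed.

(* Take the shortest initial segment of lt on K that still has size |K|; all its proper
   initial segments are then small. *)
Lemma small_initial_segments (E : choiceType) (K : set E) (lt : E -> E -> Prop) :
  well_founded lt ->
  exists2 S, S `<=` K /\ K #<= S & forall s, S s -> small K [set y | S y /\ lt y s].
Proof.
move=> lt_wf; pose long := [set x | K x /\ K #<= [set y | K y /\ lt y x]].
have [/(wf_minimal lt_wf)[m [Km Km_long] m_min]|no_long] := pselect (long !=set0).
  exists [set y | K y /\ lt y m] => [|s [Ks sm] Ks_long]; first by split=> // y [].
  apply: m_min sm; split=> //; apply: card_le_trans Ks_long _.
  by apply: subset_card_le => y [[Ky _] ys].
exists K => [|s Ks Ks_long]; first by split=> //; exact: card_lexx.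
by apply: no_long; exists s.
Qed.

Section GreedySelection.
Variables (X A T : Type) (a0 : A) (lt : X -> X -> Prop) (V : set X).
Variables (footprint : A -> set T) (legal : X -> A -> Prop) (negligible : set T -> Prop).
Hypotheses (lt_wf : well_founded lt)
  (lt_total : forall p q, V p -> V q -> p <> q -> lt p q \/ lt q p)
  (negligible_below : forall p (g : X -> A), V p ->
     (forall q, V q -> lt q p -> legal q (g q)) ->
     negligible (\bigcup_(q in [set q | V q /\ lt q p]) footprint (g q)))
  (avoid : forall p U, V p -> negligible U ->
     exists2 a, legal p a & footprint a `&` U = set0).

Lemma greedy_disjoint_selection : exists g : X -> A,
  (forall p, V p -> legal p (g p)) /\
  (forall p q, V p -> V q -> p <> q -> footprint (g p) `&` footprint (g q) = set0).
Proof.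
pose below p (rec : forall q, lt q p -> A) :=
  [set x | exists q (qp : lt q p), V q /\ footprint (rec q qp) x].
pose step p rec :=
  if pselect (exists2 a, legal p a & footprint a `&` below p rec = set0)
  is left ex then s2val (cid2 ex) else a0.
pose g := Fix lt_wf (fun=> A) step.
have gE p : g p = step p (fun q _ => g q).
  apply: Fix_eq => p' r r' rr'; congr step.
  by do 2!apply: functional_extensionality_dep => ?; exact: rr'.
have belowE p : below p (fun q _ => g q) =
    \bigcup_(q in [set q | V q /\ lt q p]) footprint (g q).
  apply/seteqP; split=> x; first by move=> [q [qp [Vq fx]]]; exists q.
  by move=> [q [Vq qp] fx]; exists q, qp.
have gP p : V p -> legal p (g p) /\ footprint (g p) `&` below p (fun q _ => g q) = set0.
  elim/(well_founded_ind lt_wf): p => p IH Vp.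
  have below_legal q : V q -> lt q p -> legal q (g q) by move=> Vq qp; exact: (IH q qp Vq).1.
  have [a la fa] := avoid Vp (negligible_below Vp below_legal).
  rewrite gE /step; case: pselect => [ex|nex].
    by split; [exact: s2valP (cid2 ex)|exact: s2valP' (cid2 ex)].
  by exfalso; apply: nex; exists a => //; rewrite belowE.
exists g; split=> [p Vp|p q Vp Vq pq]; first exact: (gP p Vp).1.
have disj r s : V r -> V s -> lt r s -> footprint (g r) `&` footprint (g s) = set0.
  move=> Vr Vs rs; rewrite setIC; apply: subsetI_eq0 (gP s Vs).2 => // x fx.
  by exists r, rs.
by case: (lt_total Vp Vq pq) => [/(disj _ _ Vp Vq)|/(disj _ _ Vq Vp)]; rewrite // setIC.
Qed.

End GreedySelection.

Section Stages.
Variables (E : choiceType) (K S : set E) (lt : E -> E -> Prop).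
Hypotheses (K_uncountable : ~ countable K) (K_regular : regular_card K)
  (lt_total : forall x y, x <> y -> lt x y \/ lt y x)
  (S_sub : S `<=` K) (K_le_S : K #<= S)
  (S_segments : forall s, S s -> small K [set y | S y /\ lt y s]).

Definition upto s := [set y | S y /\ (lt y s \/ y = s)].
Definition stage (p : E * E) := S p.1 /\ upto p.1 p.2.

Lemma small_upto s : S s -> small K (upto s).
Proof.
move=> Ss; apply: (@small_subset _ _ _ _ ([set y | S y /\ lt y s] `|` [set s])).
  by move=> y [Sy [ys|->]]; [left|right].
apply: (small_setU K_uncountable K_regular (S_segments Ss)).
exact: (finite_small K_uncountable (finite_set1 s)).
Qed.

Lemma small_bigcup_below_stage T p (F : E * E -> set T) : stage p ->
  (forall q, stage q -> lexlt lt q p -> finite_set (F q)) ->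
  small K (\bigcup_(q in [set q | stage q /\ lexlt lt q p]) F q).
Proof.
case: p => t u [/= St _] Ffin.
pose below s := [set w | upto s w /\ lexlt lt (s, w) (t, u)].
apply: (@small_subset _ _ _ _ (\bigcup_(s in upto t) \bigcup_(w in below s) F (s, w))).
  move=> x [[s w] [[/= Ss sw] swtu] Fx]; exists s; last by exists w.
  by split=> //; case: swtu => [/= st|[/= -> _]]; [left|right].
apply (small_bigcup K_uncountable K_regular) => [||s [Ss _]].
- by apply: card_le_trans (subset_card_le _) (subset_card_le S_sub) => ? [].
- exact: small_upto.
- apply (small_bigcup K_uncountable K_regular) => [||w [sw swtu]].
  + by apply: card_le_trans (subset_card_le _) (subset_card_le S_sub) => ? [[]].
  + by apply: small_subset (small_upto Ss) => ? [].
  + exact: (finite_small K_uncountable (Ffin (s, w) (conj Ss sw) swtu)).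
Qed.

Lemma card_le_stages_over u : S u -> K #<= [set t | stage (t, u)].
Proof.
move=> Su; apply: contrapT => small_over.
have := small_setU K_uncountable K_regular (S_segments Su) small_over; apply.
apply: card_le_trans K_le_S (subset_card_le _) => y Sy.
have [->|yu] := pselect (y = u); first by right; do !split=> //; right.
by case: (lt_total yu) => ?; [left|right; do !split=> //; left].
Qed.

End Stages.

Lemma circuit_finite (E : choiceType) (ind : set E -> Prop) C :
  is_finitary_matroid ind -> circuit ind C -> finite_set C.
Proof.
move=> [_ ind_fin] [depC C_min]; apply: contrapT => infC; apply: depC.
by apply: ind_fin => F finF FC; apply: C_min => // FCeq; apply: infC; rewrite -FCeq.
Qed.

Section Paths.
Variable E : choiceType.
Implicit Types (Ps Qs : set (seq E)) (P Q : seq E) (X : set E).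

Definition vertices Ps : set E := [set x | exists2 P, Ps P & x \in P].

Definition ends_at P (x : E) := exists v0 rest, P = v0 :: rest /\ x = last v0 rest.

Definition paths_ending_in Ps X := [set P | Ps P /\ exists2 x, X x & ends_at P x].

Definition vertex_disjoint Ps :=
  forall P Q, Ps P -> Ps Q -> P <> Q -> forall x, x \in P -> x \notin Q.

Lemma vertex_disjoint_eq Ps P Q x :
  vertex_disjoint Ps -> Ps P -> Ps Q -> x \in P -> x \in Q -> P = Q.
Proof.
move=> Ps_disj PsP PsQ xP xQ; apply: contrapT => PQ.
by move: (Ps_disj P Q PsP PsQ PQ x xP); rewrite xQ.
Qed.

Lemma ends_at_mem P x : ends_at P x -> x \in P.
Proof. by move=> [v0 [rest [-> ->]]]; exact: mem_last. Qed.

Lemma ends_at_unique P x y : ends_at P x -> ends_at P y -> x = y.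
Proof. by move=> [v0 [rest [-> ->]]] [w0 [rest' [[-> ->] ->]]]. Qed.

Lemma vertices_finite Ps : finite_set Ps -> finite_set (vertices Ps).
Proof.
move=> Ps_fin; apply: (@sub_finite_set _ _ (\bigcup_(P in Ps) [set` P])).
  by move=> x [P PsP xP]; exists P.
by apply: bigcup_finite => // P _; exact: finite_seq.
Qed.

Lemma paths_ending_in_finite Ps X :
  vertex_disjoint Ps -> finite_set X -> finite_set (paths_ending_in Ps X).
Proof.
move=> Ps_disj; apply: card_le_finite; apply: (card_le_rel (r := ends_at)).
  by move=> P [_ [x Xx Px]]; exists x.
move=> P Q x [PsP _] [PsQ _] /ends_at_mem xP /ends_at_mem xQ.
exact: (vertex_disjoint_eq Ps_disj PsP PsQ xP xQ).
Qed.

Lemma ter_set_subset Ps Qs : Ps `<=` Qs -> ter_set Ps `<=` ter_set Qs.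
Proof. by move=> PsQs x [v0 [rest [/PsQs PsP ->]]]; exists v0, rest. Qed.

Lemma ter_set_paths_ending_in Ps X : X `&` ter_set Ps `<=` ter_set (paths_ending_in Ps X).
Proof.
move=> x [Xx [v0 [rest [PsP xE]]]]; exists v0, rest; split=> //; split=> //.
by exists x => //; exists v0, rest.
Qed.

(* A vertex lies on at most one path of Ps, whose terminal lies in at most one petal since
   the petals of a Delta-system are disjoint: each vertex blocks at most one circuit. *)
Lemma card_le_blocked_circuits Ps (D : set (set E)) (O I U : set E) :
  vertex_disjoint Ps -> delta_system D O ->
  [set C | D C /\ exists2 x, U x & vertices (paths_ending_in Ps (C `\` O `\` I)) x] #<= U.
Proof.
move=> Ps_disj D_delta.
apply: (card_le_rel (r := fun C x => U x /\ vertices (paths_ending_in Ps (C `\` O `\` I)) x)).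
  by move=> C [DC [x Ux Vx]]; exists x.
move=> C C' x [DC _] [DC' _] [_ [P [PsP [e [[Ce nOe] _] Pe]] xP]].
move=> [_ [P' [PsP' [e' [[C'e' _] _] P'e']] xP']].
have PP' := vertex_disjoint_eq Ps_disj PsP PsP' xP xP'; subst P'.
have ee' := ends_at_unique Pe P'e'; subst e'.
by apply: contrapT => CC'; apply: nOe; rewrite -(D_delta C C' DC DC' CC').
Qed.

End Paths.

Section BPaths.
Variables (E : choiceType) (indM indN : set E -> Prop) (I JM JN : set E).
Local Notation is_bpath := (is_bpath indM indN (I `|` JM) (I `|` JN)).

Lemma card_le_bpaths Ps :
  (forall P, Ps P -> is_bpath P) -> vertex_disjoint Ps -> Ps #<= JN.
Proof.
move=> Ps_bpath Ps_disj; apply: (card_le_rel (r := fun P x => exists rest, P = x :: rest)).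
  move=> P /Ps_bpath; case: P => [//|v0 rest] [[Iv0|JNv0] nBMv0 _ _].
    by exfalso; apply: nBMv0; left.
  by exists v0 => //; exists rest.
move=> P Q x PsP PsQ [rest Pe] [rest' Qe]; subst P Q.
exact: (vertex_disjoint_eq Ps_disj PsP PsQ (mem_head x rest) (mem_head x rest')).
Qed.

Lemma is_bpath_single v : JN v -> ~ JM v -> ~ I v -> is_bpath [:: v].
Proof. by move=> JNv nJMv nIv; split=> //; [right|case]. Qed.

End BPaths.

Section Assembly.
Variables (E : choiceType) (indM indN : set E -> Prop) (I JM JN : set E).
Local Notation is_bpath := (is_bpath indM indN (I `|` JM) (I `|` JN)).
Local Notation bpath_system := (bpath_system indM indN (I `|` JM) (I `|` JN) JN).
Hypotheses (finM : is_finitary_matroid indM) (JN_I : JN `&` I = set0)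
  (JN_uncountable : ~ countable JN) (JN_regular : regular_card JN)
  (JM_small : small JN JM).
Variables (O' : set (set E)) (W : set E -> set (seq E)) (D : set E -> set (set E)).
Hypothesis W_D_witness : forall O, O' O -> bpath_system (W O) /\
  [/\ D O #= JN, (forall C, D O C -> circuit indM C), delta_system (D O) O &
      (forall C, D O C -> C `\` O `<=` I `|` ter_set (W O))].
Variables (lt : E -> E -> Prop) (S : set E) (h : set E -> E).
Hypotheses (lt_wf : well_founded lt)
  (lt_total : forall x y, x <> y -> lt x y \/ lt y x)
  (S_sub : S `<=` JN) (JN_le_S : JN #<= S)
  (S_segments : forall s, S s -> small JN [set y | S y /\ lt y s])
  (h_inj : {in O' &, injective h}) (h_S : h @` O' `<=` S).
Local Notation stage := (stage S lt).

(* At stage (t, u) the popular set O with h O = u, if any, claims a circuit C of its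
   Delta-system, which brings along the paths of O's witness ending in the petal of C
   outside I; every stage also adds the one-vertex b-path [:: pad]. Claimed circuits
   belong to the footprint so that no circuit is claimed twice. *)
Record step_choice := StepChoice { claim : option (set E * set E); pad : E }.

Definition claimed_paths (c : option (set E * set E)) : set (seq E) :=
  if c is Some OC then paths_ending_in (W OC.1) (OC.2 `\` OC.1 `\` I) else set0.

Definition claimed_circuits (a : step_choice) : set (set E) :=
  [set C | exists O, claim a = Some (O, C)].

Definition footprint (a : step_choice) : set (E + set E) :=
  inl @` (pad a |` vertices (claimed_paths (claim a))) `|` inr @` claimed_circuits a.

Definition legal_claim (u : E) (c : option (set E * set E)) :=
  (forall O C, c = Some (O, C) -> O' O /\ D O C) /\
  (forall O, O' O -> h O = u -> exists C, c = Some (O, C)).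

Definition legal (p : E * E) (a : step_choice) :=
  [/\ legal_claim p.2 (claim a), JN (pad a), ~ JM (pad a) &
      ~ vertices (claimed_paths (claim a)) (pad a)].

Lemma claimed_paths_finite u c : legal_claim u c -> finite_set (claimed_paths c).
Proof.
case: c => [[O C] [/(_ O C erefl)[O'O DC] _]|_]; last exact: finite_set0.
have [[_ _ W_disj] [_ D_circ _ _]] := W_D_witness O'O.
apply: paths_ending_in_finite W_disj _.
by apply: sub_finite_set (circuit_finite finM (D_circ C DC)) => x [[]].
Qed.

Lemma legal_footprint_finite p a : legal p a -> finite_set (footprint a).
Proof.
move=> [a_claim _ _ _]; rewrite finite_setU; split; apply: finite_image.
  rewrite finite_setU; split; first exact: finite_set1.
  exact: vertices_finite (claimed_paths_finite a_claim).
rewrite /claimed_circuits; case: (claim a) => [[O C]|].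
  by apply: sub_finite_set (finite_set1 C) => C' [O2 [_ ->]].
by apply: sub_finite_set (finite_set0 (set E)) => C' [].
Qed.

Lemma legal_claim_avoiding u (Ul : set E) (Ur : set (set E)) :
  small JN Ul -> small JN Ur -> exists c, [/\ legal_claim u c,
    (forall x, vertices (claimed_paths c) x -> ~ Ul x) &
    (forall O C, c = Some (O, C) -> ~ Ur C)].
Proof.
move=> sUl sUr; have [[O O'O hO]|no_owner] := pselect (exists2 O, O' O & h O = u).
  have [[_ _ W_disj] [/card_eqPle[_ JN_le_D] _ D_delta _]] := W_D_witness O'O.
  have blocked := card_le_blocked_circuits I Ul W_disj D_delta.
  have [C DC C_free] := small_not_cover JN_le_D
    (small_setU JN_uncountable JN_regular (small_card_le blocked sUl) sUr).
  exists (Some (O, C)); split; first split.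
  - by move=> _ _ [<- <-].
  - move=> O2 O'O2 hO2; exists C.
    by rewrite (h_inj (mem_set O'O2) (mem_set O'O) (etrans hO2 (esym hO))).
  - by move=> x Vx Ulx; apply: C_free; left; split=> //; exists x.
  - by move=> O2 C2 [_ <-] UrC; apply: C_free; right.
exists None; split=> [|x [] //|//]; split=> // O O'O hO.
by exfalso; apply: no_owner; exists O.
Qed.

Lemma legal_step p U : small JN U -> exists2 a, legal p a & footprint a `&` U = set0.
Proof.
move=> sU.
have sUl : small JN (inl @^-1` U) by apply: small_preimage sU => ? ? [].
have sUr : small JN (inr @^-1` U) by apply: small_preimage sU => ? ? [].
have [c [c_legal c_Ul c_Ur]] := legal_claim_avoiding p.2 sUl sUr.
have sUsed := small_setU JN_uncountable JN_regular
  (small_setU JN_uncountable JN_regular JM_small sUl)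
  (finite_small JN_uncountable (vertices_finite (claimed_paths_finite c_legal))).
have [v JNv v_free] := small_not_cover (card_lexx JN) sUsed.
exists (StepChoice c v).
  by split=> //; [move=> JMv|move=> Vv]; apply: v_free; [left; left|right].
rewrite -subset0 => y [[[x [xv|Vx] yE]|[C [O cE] yE]] Ux]; subst y.
- by move: xv Ux => /= -> Uv; apply: v_free; left; right.
- exact: c_Ul Vx Ux.
- exact: c_Ur cE Ux.
Qed.

Lemma legal_selection : exists g : E * E -> step_choice,
  (forall p, stage p -> legal p (g p)) /\
  (forall p q, stage p -> stage q -> p <> q -> footprint (g p) `&` footprint (g q) = set0).
Proof.
have [x0 _] := infinite_setN0 (uncountable_infinite JN_uncountable).
apply: (greedy_disjoint_selection (StepChoice None x0) (lexlt_wf lt_wf) (V := stage)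
  (footprint := footprint) (legal := legal) (negligible := @small _ JN _)).
- by move=> p q _ _; exact: lexlt_total.
- move=> p g stp g_legal.
  apply: (small_bigcup_below_stage JN_uncountable JN_regular S_sub S_segments) => // q stq qp.
  exact: legal_footprint_finite (g_legal q stq qp).
- by move=> p U _; exact: legal_step.
Qed.

Lemma claimed_paths_bpaths u c : legal_claim u c ->
  (forall P, claimed_paths c P -> is_bpath P) /\ vertex_disjoint (claimed_paths c).
Proof.
case: c => [[O C] [/(_ O C erefl)[O'O _] _]|_]; last by split=> // P [].
have [[W_bpath _ W_disj] _] := W_D_witness O'O.
by split=> [P [WP _]|P Q [WP _] [WQ _]]; [exact: W_bpath|exact: W_disj].
Qed.

Section Combination.
Variable g : E * E -> step_choice.
Hypotheses (g_legal : forall p, stage p -> legal p (g p))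
  (g_disj : forall p q, stage p -> stage q -> p <> q ->
     footprint (g p) `&` footprint (g q) = set0).

Definition stage_paths (a : step_choice) : set (seq E) :=
  claimed_paths (claim a) `|` [set [:: pad a]].

Definition combined_paths : set (seq E) :=
  [set P | exists2 p, stage p & stage_paths (g p) P].

Lemma stage_paths_footprint a P x : stage_paths a P -> x \in P -> footprint a (inl x).
Proof.
case=> [cP xP|->]; last by rewrite inE => /eqP ->; left; exists (pad a) => //; left.
by left; exists x => //; right; exists P.
Qed.

Lemma stage_paths_bpath p P : stage p -> stage_paths (g p) P -> is_bpath P.
Proof.
move=> /g_legal[/claimed_paths_bpaths[c_bpath _] JNv nJMv _] [/c_bpath //|->].
apply: is_bpath_single => // Iv.
by have : (JN `&` I) (pad (g p)) by []; rewrite JN_I.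
Qed.

Lemma stage_paths_disjoint p : stage p -> vertex_disjoint (stage_paths (g p)).
Proof.
move=> /g_legal[/claimed_paths_bpaths[_ c_disj] _ _ v_free].
have v_notin P : claimed_paths (claim (g p)) P -> pad (g p) \notin P.
  by move=> cP; apply/negP => vP; apply: v_free; exists P.
move=> P Q [cP|->] [cQ|->] PQ x; first exact: c_disj.
- by move=> xP; rewrite inE; apply: contraNneq (v_notin P cP) => <-.
- by rewrite inE => /eqP ->; exact: v_notin.
- by case: PQ.
Qed.

Lemma combined_paths_disjoint : vertex_disjoint combined_paths.
Proof.
move=> P Q [p stp Pp] [q stq Qq] PQ x xP; apply/negP => xQ.
have [pq|pq] := pselect (p = q).
  by subst q; move: xQ; apply/negP; exact: stage_paths_disjoint Pp Qq PQ x xP.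
have := g_disj stp stq pq; rewrite -subset0 => /(_ (inl x)); apply.
by split; [exact: stage_paths_footprint Pp xP|exact: stage_paths_footprint Qq xQ].
Qed.

Lemma combined_paths_system : bpath_system combined_paths.
Proof.
have cp_bpath P : combined_paths P -> is_bpath P.
  by move=> [p stp]; exact: stage_paths_bpath.
have diag t : S t -> stage (t, t) by move=> St; do !split=> //; right.
split=> //; last exact: combined_paths_disjoint.
apply/card_eqPle; split; first exact: card_le_bpaths cp_bpath combined_paths_disjoint.
apply: card_le_trans JN_le_S (card_le_of_fun (f := fun t => [:: pad (g (t, t))]) _ _).
  move=> t t' /set_mem St /set_mem St' [vv]; apply: contrapT => tt'.
  have := g_disj (diag t St) (diag t' St') (fun e => tt' (congr1 fst e)).
  rewrite -subset0 => /(_ (inl (pad (g (t, t))))); apply.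
  by split; left; exists (pad (g (t, t))) => //; left.
by move=> _ [t St <-]; exists (t, t); [exact: diag|right].
Qed.

Lemma combined_paths_witness O : O' O ->
  witnesses indM indN I (I `|` JM) (I `|` JN) JN combined_paths O.
Proof.
move=> O'O; split; first exact: combined_paths_system.
have [_ [/card_eqPle[D_le_JN _] D_circ D_delta D_petal]] := W_D_witness O'O.
have ShO : S (h O) := h_S (imageP h O'O).
pose D' := [set C | exists2 t, stage (t, h O) & claim (g (t, h O)) = Some (O, C)].
have D'D : D' `<=` D O.
  by move=> C [t stt cE]; have [[/(_ O C cE)[]]] := g_legal stt.
exists D'; split.
- apply/card_eqPle; split; first exact: card_le_trans (subset_card_le D'D) D_le_JN.
  apply: card_le_trans
    (card_le_stages_over JN_uncountable JN_regular lt_total JN_le_S S_segments ShO) _.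
  apply: (card_le_rel (r := fun t C => claim (g (t, h O)) = Some (O, C))).
    move=> t stt; have [[_ owner] _ _ _] := g_legal stt.
    by have [C cE] := owner O O'O erefl; exists C => //; exists t.
  move=> t t' C stt stt' cE cE'; apply: contrapT => tt'.
  have := g_disj stt stt' (fun e => tt' (congr1 fst e)).
  by rewrite -subset0 => /(_ (inr C)); apply; split; right; exists C => //; exists O.
- by move=> C /D'D; exact: D_circ.
- by move=> C C' /D'D DC /D'D DC'; exact: D_delta.
- move=> C [t stt cE] e Ce; have [Ie|nIe] := pselect (I e); first by left.
  have [/nIe[]|Te] := D_petal C (D'D C (ex_intro2 _ _ t stt cE)) e Ce.
  right; apply: (@ter_set_subset _ (claimed_paths (claim (g (t, h O))))).
    by move=> P cP; exists (t, h O) => //; left.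
  by rewrite cE; apply: ter_set_paths_ending_in.
Qed.

End Combination.

Lemma common_witness : exists Ps, bpath_system Ps /\
  forall O, O' O -> witnesses indM indN I (I `|` JM) (I `|` JN) JN Ps O.
Proof.
have [g [g_legal g_disj]] := legal_selection.
exists (combined_paths g); split=> [|O O'O].
  exact: combined_paths_system g_legal g_disj.
exact: (combined_paths_witness g_legal g_disj O'O).
Qed.

End Assembly.

Theorem mainTheorem13 (E : choiceType) (indM indN : set E -> Prop)
  (I JM JN : set E) :
  is_finitary_matroid indM -> is_finitary_matroid indN ->
  maximal_set (fun X => indM X /\ indN X) I ->
  contr_base indM I JM -> contr_base indN I JN ->
  ~ countable JN -> regular_card JN -> card_lt JM JN ->
  forall O' : set (set E),
    (forall O, O' O -> popular indM indN I (I `|` JM) (I `|` JN) JN O) ->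
    O' #<= JN ->
    exists Ps : set (seq E),
      bpath_system indM indN (I `|` JM) (I `|` JN) JN Ps /\
      forall O, O' O -> witnesses indM indN I (I `|` JM) (I `|` JN) JN Ps O.
Proof.
move=> finM _ _ _ [[JN_I _] _] JN_unc JN_reg [_ JM_small] O' O'_popular O'_le.
have /choice[WD WD_wit] : forall O, exists WD : set (seq E) * set (set E), O' O ->
    bpath_system indM indN (I `|` JM) (I `|` JN) JN WD.1 /\
    [/\ WD.2 #= JN, (forall C, WD.2 C -> circuit indM C), delta_system WD.2 O &
        (forall C, WD.2 C -> C `\` O `<=` I `|` ter_set WD.1)].
  move=> O; have [/O'_popular[_ [Ps [Ps_sys [D D_wit]]]]|nO] := pselect (O' O).
    by exists (Ps, D).
  by exists (set0, set0) => /nO.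
have [lt [lt_wf lt_total]] := well_founded_total_order E.
have [S [S_sub JN_le_S] S_segments] := small_initial_segments JN lt_wf.
have S_nonempty := card_le_nonempty JN_le_S (infinite_setN0 (uncountable_infinite JN_unc)).
have [h h_inj h_S] := card_le_injection (card_le_trans O'_le JN_le_S) S_nonempty.
exact: (common_witness finM JN_I JN_unc JN_reg JM_small WD_wit lt_wf lt_total
  S_sub JN_le_S S_segments h_inj h_S).
Qed.
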